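(* Let $m,k\in\mathbb{N}$ and let $\alpha\in\mathbb{C}$ with $\alpha,\ 2+\alpha+2m+k,\ 2+\alpha+2m\notin\mathbb{Z}_0^-$. Then \[ {}_3F_2\left[\begin{array}{r} -2m-1,\ \alpha,\ 2+\alpha+2m+k;\\ -2m-k-1,\ 2+\alpha+2m;\end{array}1\right]_{2m+1}=\frac{(1+\alpha)(2+2k+\alpha+4m)(2+\alpha)_{2m}\left(1+\frac{\alpha}{2}+k\right)_{2m}}{(2+\alpha)(1+2m+k)\left(2+\frac{\alpha}{2}\right)_{2m}(1+k)_{2m}}. \]
   Context: $\mathbb{N}=\{1,2,3,\dots\}$, $\mathbb{Z}_0^-=\{0,-1,-2,\dots\}$. For $a\in\mathbb{C}$ and $n\in\mathbb{N}_0$, $(a)_0=1$ and $(a)_n=a(a+1)\cdots(a+n-1)$. For $N\in\mathbb{N}_0$, ${}_3F_2\left[\begin{array}{r} a_1,a_2,a_3;\\ b_1,b_2;\end{array}z\right]_N=\sum_{n=0}^{N}\frac{(a_1)_n(a_2)_n(a_3)_n}{(b_1)_n(b_2)_n}\frac{z^n}{n!}$ (the sum of the first $N+1$ terms), defined whenever $(b_1)_n(b_2)_n\neq0$ for $0\le n\le N$. *)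

From HB Require Import structures.
From mathcomp Require Import all_boot all_order all_algebra.
From mathcomp Require Import complex.
From mathcomp Require Import reals.
Set Implicit Arguments. Unset Strict Implicit. Unset Printing Implicit Defensive.
Import Order.TTheory GRing.Theory Num.Theory.
Local Open Scope ring_scope.

Definition poch (F : pzRingType) (a : F) (n : nat) : F :=
  \prod_(i < n) (a + i%:R).

Definition notNonPosInt (F : pzRingType) (a : F) : Prop :=
  forall n : nat, a <> - (n%:R).

Definition F32_trunc (F : fieldType) (a1 a2 a3 b1 b2 z : F) (N : nat) : F :=
  \sum_(n < N.+1)
    (poch a1 n * poch a2 n * poch a3 n) / (poch b1 n * poch b2 n)
      * z ^+ n / (n`!)%:R.

From HB Require Import structures.
From mathcomp Require Import all_boot all_order all_algebra.
From mathcomp Require Import complex reals.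
From mathcomp Require Import ring zify.
Import Order.TTheory GRing.Theory Num.Theory.
Set Implicit Arguments. Unset Strict Implicit. Unset Printing Implicit Defensive.
Local Open Scope ring_scope.

(* With [c := a + N + 1], let [S_k] be the terminating sum with parameters
   [(-N, a, c + k; -N - k, c)] at [z = 1]; the theorem is the case [N = 2m + 1].
   Zeilberger's algorithm gives [S_(k+1) = rho_k S_k] together with a
   certificate [G_k], a rational multiple of the summand [t_k], such that
   [t_(k+1)(n) - rho_k t_k(n) = G_k(n+1) - G_k(n)] and [G_k] vanishes at
   [n = 0] and [n = N + 1], so summing over [n] telescopes.  At [k = 0] the sum
   is [sum_n (a)_n / n! = (a+1)_N / N!], and solving the recurrence gives
   [S_k = (1+a)_N (1 + a/2 + k)_N / ((1 + a/2)_N (1 + k)_N)], which for odd [N]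
   is the stated right-hand side. *)

Section Pochhammer.
Variable R : pzRingType.
Implicit Types (x : R) (n : nat).

Lemma pochS x n : poch x n.+1 = poch x n * (x + n%:R).
Proof. by rewrite /poch big_ord_recr. Qed.

Lemma pochSl x n : poch x n.+1 = x * poch (x + 1) n.
Proof.
rewrite /poch big_ord_recl addr0; congr (_ * _).
by apply: eq_bigr => i _; rewrite /bump /= natrD addrA.
Qed.

Lemma poch1 n : poch 1 n = n`!%:R :> R.
Proof.
elim: n => [|n IHn]; first by rewrite /poch big_ord0.
by rewrite pochS IHn factS mulnC natrM addrC natr1.
Qed.

Lemma poch_oppn_eq0 N n : (N < n)%N -> poch (- N%:R) n = 0 :> R.
Proof.
by move=> /subnKC <-; rewrite /poch big_split_ord big_ord_recr /= addNr !(mulr0, mul0r).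
Qed.

End Pochhammer.

Section PochhammerField.
Variable F : fieldType.
Implicit Types (x : F) (n : nat).

Lemma poch_neq0 x n : (forall i, (i < n)%N -> x + i%:R != 0) -> poch x n != 0.
Proof. by move=> neq0; apply/prodf_neq0 => i _; apply: neq0. Qed.

Lemma poch_addr1 x n : x != 0 -> poch (x + 1) n = poch x n * (x + n%:R) / x.
Proof. by move=> x_neq0; rewrite -pochS pochSl mulrC mulKf. Qed.

End PochhammerField.

Definition F32_term (F : fieldType) (a1 a2 a3 b1 b2 z : F) (n : nat) : F :=
  poch a1 n * poch a2 n * poch a3 n / (poch b1 n * poch b2 n) * z ^+ n / n`!%:R.

Lemma F32_termS (F : fieldType) (a1 a2 a3 b1 b2 z : F) n :
  F32_term a1 a2 a3 b1 b2 z n.+1 = F32_term a1 a2 a3 b1 b2 z n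
    * ((a1 + n%:R) * (a2 + n%:R) * (a3 + n%:R) * z)
    / ((b1 + n%:R) * (b2 + n%:R) * n.+1%:R).
Proof. by rewrite /F32_term !pochS exprS factS natrM !invfM; ring. Qed.

Lemma notNonPosInt_addn (R : pzRingType) (x : R) j : notNonPosInt x -> x + j%:R != 0.
Proof. by move=> xP; rewrite addr_eq0; apply/eqP; apply: xP. Qed.

Section Char0.
Variable F : fieldType.
Hypothesis charF : [pchar F] =i pred0.

Lemma natf_eq0 n : (n%:R == 0 :> F) = (n == 0)%N.
Proof. exact: (pcharf0P _).1. Qed.

Lemma natf_fact_neq0 n : n`!%:R != 0 :> F.
Proof. by rewrite natf_eq0 -lt0n fact_gt0. Qed.

Lemma sum_poch_div_fact (x : F) M :
  \sum_(n < M.+1) poch x n / n`!%:R = poch (x + 1) M / M`!%:R.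
Proof.
elim: M => [|M IHM]; first by rewrite big_ord1 /poch !big_ord0.
rewrite big_ord_recr /= IHM pochSl pochS factS natrM.
move: (poch _ M) (M`!%:R) (natf_fact_neq0 M) => P f f_neq0.
by field; rewrite f_neq0 addrC natr1 natf_eq0.
Qed.

Lemma natf_subn_neq0 m n : (n < m)%N -> m%:R - n%:R != 0 :> F.
Proof. by move=> lt_nm; rewrite -natrB ?natf_eq0 -?lt0n ?subn_gt0 // ltnW. Qed.

Lemma poch_oppn_neq0 M n : (n <= M)%N -> poch (- M%:R : F) n != 0.
Proof.
move=> le_nM; apply: poch_neq0 => i lt_in.
by rewrite addrC -opprB oppr_eq0 natf_subn_neq0 // (leq_trans lt_in).
Qed.

Lemma poch_natS_neq0 k n : poch (1 + k%:R : F) n != 0.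
Proof. by apply: poch_neq0 => i _; rewrite -addrA -natrD addrC natr1 natf_eq0. Qed.

Section BalancedSum.
Variables (a c : F) (N : nat).
Hypothesis aP : notNonPosInt a.
Hypothesis c_balanced : c = a + N.+1%:R.

Definition hg_term k n := F32_term (- N%:R) a (c + k%:R) (- (N + k)%:R) c 1 n.

Definition hg_sum k := \sum_(n < N.+1) hg_term k n.

Definition hg_ratio k :=
  (a + 2 * (N + k)%:R + 2) * k.+1%:R / ((N + k).+1%:R * (a + 2 * k%:R + 2)).

Definition hg_cert k n :=
  n%:R * ((N + k).+1%:R - n%:R) * (c + n%:R - 1) * hg_term k n
    / ((c + k%:R) * (N + k).+1%:R * (a + 2 * k%:R + 2)).

Lemma hg_sumE k : F32_trunc (- N%:R) a (c + k%:R) (- (N + k)%:R) c 1 N = hg_sum k.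
Proof. by []. Qed.

Lemma a_addn_neq0 j : a + j%:R != 0.
Proof. exact: notNonPosInt_addn. Qed.

Lemma a_add_even_neq0 k : a + 2 * k%:R + 2 != 0.
Proof. by rewrite -natrM -addrA -natrD a_addn_neq0. Qed.

Lemma c_addn_neq0 j : c + j%:R != 0.
Proof. by rewrite c_balanced -addrA -natrD a_addn_neq0. Qed.

Lemma half_addn_neq0 j : 1 + a / 2 + j%:R != 0.
Proof.
have two_neq0 : 2 != 0 :> F by rewrite natf_eq0.
have -> : 1 + a / 2 + j%:R = (a + 2 * j%:R + 2) / 2 by field.
by rewrite mulf_neq0 ?invr_eq0 ?a_add_even_neq0.
Qed.

Lemma poch_half_neq0 n : poch (1 + a / 2) n != 0.
Proof. by apply: poch_neq0 => i _; apply: half_addn_neq0. Qed.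

Lemma hg_term_last k : hg_term k N.+1 = 0.
Proof. by rewrite /hg_term /F32_term poch_oppn_eq0 // !mul0r. Qed.

Lemma hg_termSk k n : (n <= N)%N ->
  hg_term k.+1 n = hg_term k n * ((c + (k + n)%:R) * ((N + k).+1%:R - n%:R))
                                / ((c + k%:R) * (N + k).+1%:R).
Proof.
move=> le_nN.
have Nkn_neq0 : (N + k).+1%:R - n%:R != 0 :> F.
  by rewrite natf_subn_neq0 // ltnS (leq_trans le_nN) ?leq_addr.
have shift_c : poch (c + k.+1%:R) n = poch (c + k%:R) n * (c + (k + n)%:R) / (c + k%:R).
  by rewrite -natr1 addrA poch_addr1 ?c_addn_neq0 // -addrA -natrD.
have shift_b : poch (- (N + k.+1)%:R) n
    = (N + k).+1%:R * poch (- (N + k)%:R) n / ((N + k).+1%:R - n%:R) :> F.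
  rewrite -[X in X = _](mulfK Nkn_neq0) addnS; congr (_ / _).
  have -> : (N + k).+1%:R - n%:R = - (- (N + k).+1%:R + n%:R) :> F.
    by rewrite opprD opprK addrC.
  by rewrite mulrN -pochS pochSl mulNr opprK -natr1 opprD addrNK.
rewrite /hg_term /F32_term shift_c shift_b !expr1n !mulr1.
have B_neq0 := poch_oppn_neq0 (leq_trans le_nN (leq_addr k N)).
have C_neq0 : poch c n != 0 by apply: poch_neq0 => i _; apply: c_addn_neq0.
have Nk_neq0 : (N + k).+1%:R != 0 :> F by rewrite natf_eq0.
move: ((N + k).+1%:R) Nk_neq0 Nkn_neq0 => M M_neq0 Mn_neq0.
by field; rewrite M_neq0 Mn_neq0 c_addn_neq0 natf_fact_neq0 B_neq0 C_neq0.
Qed.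

Lemma hg_certS k n : (n <= N)%N ->
  hg_cert k n.+1 = hg_term k n * ((N%:R - n%:R) * (a + n%:R) * (c + (k + n)%:R))
                   / ((c + k%:R) * (N + k).+1%:R * (a + 2 * k%:R + 2)).
Proof.
move=> le_nN; rewrite /hg_cert /hg_term F32_termS -/(hg_term k n) !mulr1.
have [Nk_eq | Nk_neq] := eqVneq (N + k)%N n.
  (* The term ratio has a zero denominator only here, where both sides vanish. *)
  have [-> ->] : k = 0%N /\ n = N by lia.
  by rewrite addn0 !subrr !(mulr0, mul0r).
have lt_nNk : (n < N + k)%N by rewrite ltn_neqAle eq_sym Nk_neq (leq_trans le_nN) ?leq_addr.
field; rewrite a_add_even_neq0 !c_addn_neq0 -natrD ![1 + _]addrC !natr1 !natf_eq0 /=.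
by rewrite [- _ + _]addrC -opprB oppr_eq0 natf_subn_neq0.
Qed.

Lemma hg_term_telescoping k n : (n <= N)%N ->
  hg_term k.+1 n - hg_ratio k * hg_term k n = hg_cert k n.+1 - hg_cert k n.
Proof.
move=> le_nN; rewrite hg_termSk // hg_certS // /hg_cert /hg_ratio.
move: (hg_term k n) => T.
rewrite c_balanced; field.
by rewrite a_add_even_neq0 ![1 + _]addrC !natr1 -c_balanced c_addn_neq0 -natrD natr1 natf_eq0.
Qed.

Lemma hg_sumS k : hg_sum k.+1 = hg_ratio k * hg_sum k.
Proof.
apply/eqP; rewrite -subr_eq0 /hg_sum mulr_sumr -sumrB.
rewrite (eq_bigr (fun n : 'I_N.+1 => hg_cert k n.+1 - hg_cert k n)) => [|n _].
  rewrite -(big_mkord xpredT (fun n => hg_cert k n.+1 - hg_cert k n)) telescope_sumr //.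
  by rewrite /hg_cert hg_term_last !(mulr0, mul0r) subrr.
by rewrite hg_term_telescoping // -ltnS.
Qed.

Lemma hg_sum0 : hg_sum 0 = poch (a + 1) N / N`!%:R.
Proof.
rewrite -sum_poch_div_fact; apply: eq_bigr => n _.
have le_nN : (n <= N)%N by rewrite -ltnS.
have B_neq0 := poch_oppn_neq0 le_nN.
have C_neq0 : poch c n != 0 by apply: poch_neq0 => i _; apply: c_addn_neq0.
rewrite /hg_term /F32_term addn0 addr0 expr1n mulr1.
by field; rewrite B_neq0 C_neq0 natf_fact_neq0.
Qed.

Lemma hg_sum_closed k :
  hg_sum k = poch (1 + a) N * poch (1 + a / 2 + k%:R) N
             / (poch (1 + a / 2) N * poch (1 + k%:R) N).
Proof.
elim: k => [|k IHk].
  rewrite hg_sum0 mulr0n !addr0 poch1 [1 + a]addrC.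
  by field; rewrite poch_half_neq0 natf_fact_neq0.
have k1_neq0 : 1 + k%:R != 0 :> F by rewrite addrC natr1 natf_eq0.
rewrite hg_sumS IHk -(natr1 k) !addrA.
rewrite (poch_addr1 _ (half_addn_neq0 k)) (poch_addr1 _ k1_neq0) /hg_ratio.
field; rewrite k1_neq0 poch_natS_neq0 poch_half_neq0 natf_eq0 -addrA -natrD addrC natr1.
by rewrite natf_eq0 (_ : 2 + a + k%:R * 2 = a + 2 * k%:R + 2) ?a_add_even_neq0 //; ring.
Qed.

End BalancedSum.

End Char0.

Local Open Scope complex_scope.

Theorem mainTheorem15 (R : realType) (m k : nat) (alpha : R[i])
  (hm : (0 < m)%N) (hk : (0 < k)%N)
  (h1 : notNonPosInt alpha)
  (h2 : notNonPosInt (2 + alpha + (2 * m)%:R + k%:R))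
  (h3 : notNonPosInt (2 + alpha + (2 * m)%:R)) :
  F32_trunc (- ((2 * m).+1)%:R) alpha (2 + alpha + (2 * m)%:R + k%:R)
            (- ((2 * m + k).+1)%:R) (2 + alpha + (2 * m)%:R) 1 (2 * m).+1
  = ((1 + alpha) * (2 + (2 * k)%:R + alpha + (4 * m)%:R)
       * poch (2 + alpha) (2 * m) * poch (1 + alpha / 2 + k%:R) (2 * m))
    / ((2 + alpha) * (1 + (2 * m)%:R + k%:R)
       * poch (2 + alpha / 2) (2 * m) * poch (1 + k%:R) (2 * m)).
Proof.
(* [h1] alone keeps every denominator nonzero. *)
have charC : [pchar R[i]] =i pred0 := pchar_num _.
set N := (2 * m).+1.
have c_bal : 2 + alpha + (2 * m)%:R = alpha + N.+1%:R by rewrite /N; ring.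
have regroup (x1 x2 x3 x4 : R[i]) : x1 * x2 * x3 * x4 = (x1 * x3) * (x2 * x4) by ring.
have E1 : (1 + alpha) * poch (2 + alpha) (2 * m) = poch (1 + alpha) N.
  by rewrite pochSl; congr (_ * poch _ _); ring.
have E2 : (2 + (2 * k)%:R + alpha + (4 * m)%:R) * poch (1 + alpha / 2 + k%:R) (2 * m)
          = 2 * poch (1 + alpha / 2 + k%:R) N.
  by rewrite /N pochS mulrCA [LHS]mulrC; congr (_ * _); field.
have E3 : (2 + alpha) * poch (2 + alpha / 2) (2 * m) = 2 * poch (1 + alpha / 2) N.
  by rewrite pochSl mulrA; congr (_ * poch _ _); [field | ring].
have E4 : (1 + (2 * m)%:R + k%:R) * poch (1 + k%:R) (2 * m) = poch (1 + k%:R) N :> R[i].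
  by rewrite /N pochS mulrC; congr (_ * _); ring.
rewrite -addSn hg_sumE (hg_sum_closed charC h1 c_bal).
rewrite (regroup (1 + alpha)) (regroup (2 + alpha)) E1 E2 E3 E4.
by field; rewrite (poch_natS_neq0 charC) (poch_half_neq0 charC h1).
Qed.
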